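(* Let $\mathfrak{A}=(S_\Omega,S_{\mathcal E},\Omega,\mathcal E,B,u)$ be an accessible GPT fragment, and let $H_\Omega:S_\Omega\to\mathbb R^n$ and $H_{\mathcal E}:S_{\mathcal E}^*\to\mathbb R^m$ be its facet maps. Then $\mathfrak A$ admits a simplicial-cone embedding if and only if there exists a real $m\times n$ matrix $\sigma$ with all entries nonnegative such that $$B(w,v)=H_{\mathcal E}(w)^T\,\sigma\,H_\Omega(v)\qquad\text{for all } w\in S_{\mathcal E}^*,\ v\in S_\Omega .$$ In the quantum case ($S_\Omega,S_{\mathcal E}$ subspaces of the Hermitian operators on a finite-dimensional Hilbert space $\mathcal H$, spanned respectively by a finite set $\Omega$ of positive semidefinite operators and a finite set $\mathcal E$ of operators $0\le E\le \mathbb 1$, with effects acting by the trace pairing and $B(w,v)=\mathrm{tr}(wv)$), this condition reads $I_{\mathcal E}^T I_\Omega=H_{\mathcal E}^T\sigma H_\Omega$ in matrix form, where $I_\Omega,I_{\mathcal E}$ are the inclusion maps of $S_\Omega,S_{\mathcal E}$ into the space of Hermitian operators (expressed in bases orthonormal for the Hilbert–Schmidt inner product).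
   Context: An accessible GPT fragment $\mathfrak A=(S_\Omega,S_{\mathcal E},\Omega,\mathcal E,B,u)$ consists of: finite-dimensional real vector spaces $S_\Omega$ and $S_{\mathcal E}$; a set $\Omega\subset S_\Omega$ of states which spans $S_\Omega$; a set $\mathcal E\subset S_{\mathcal E}^*$ of effects which spans $S_{\mathcal E}^*$; a bilinear form $B:S_{\mathcal E}^*\times S_\Omega\to\mathbb R$ (the probability rule, the probability of effect $e$ on state $s$ being $B(e,s)$); and a unit effect $u\in\mathcal E$. The convex hulls of $\Omega$ and of $\mathcal E$ are assumed to have finitely many extreme points. $\mathrm{Cone}[\Omega]=\{\sum_\alpha r_\alpha s_\alpha: s_\alpha\in\Omega, r_\alpha\ge0\}$, and similarly $\mathrm{Cone}[\mathcal E]$; these are polyhedral cones. The dual cone $\mathrm{Cone}[\Omega]^*=\{h\in S_\Omega^*: h(v)\ge 0\ \forall v\in\mathrm{Cone}[\Omega]\}$ and $\mathrm{Cone}[\mathcal E]^*=\{g\in S_{\mathcal E}: w(g)\ge0\ \forall w\in\mathrm{Cone}[\mathcal E]\}$ (identifying $S_{\mathcal E}^{**}=S_{\mathcal E}$). Facet maps: let $h_1,\dots,h_n\in S_\Omega^*$ be one representative of each extreme ray of $\mathrm{Cone}[\Omega]^*$ (equivalently, the facet inequalities of $\mathrm{Cone}[\Omega]$), and define $H_\Omega(v)=(h_1(v),\dots,h_n(v))^T$; let $g_1,\dots,g_m\in S_{\mathcal E}$ be one representative of each extreme ray of $\mathrm{Cone}[\mathcal E]^*$, and define $H_{\mathcal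 E}(w)=(w(g_1),\dots,w(g_m))^T$. Thus $H_\Omega(v)\ge_e0$ iff $v\in\mathrm{Cone}[\Omega]$ and $H_{\mathcal E}(w)\ge_e 0$ iff $w\in\mathrm{Cone}[\mathcal E]$, where $\ge_e$ denotes entrywise nonnegativity. A simplicial-cone embedding of $\mathfrak A$ is a finite set $\Lambda$ together with linear maps $\tau_\Omega:S_\Omega\to\mathbb R^\Lambda$ and $\tau_{\mathcal E}:S_{\mathcal E}^*\to\mathbb R^\Lambda$ such that $\tau_\Omega(s)\ge_e 0$ for all $s\in\Omega$, $\tau_{\mathcal E}(e)\ge_e0$ for all $e\in\mathcal E$, and $B(w,v)=\tau_{\mathcal E}(w)\cdot\tau_\Omega(v)$ (standard dot product on $\mathbb R^\Lambda$) for all $w\in S_{\mathcal E}^*$, $v\in S_\Omega$. A simplex embedding is a simplicial-cone embedding which additionally satisfies $\tau_{\mathcal E}(u)=(1,1,\dots,1)$. (A scenario is called classically explainable when it admits a simplex embedding.) *)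

From HB Require Import structures.
From mathcomp Require Import all_boot all_order all_algebra.
From mathcomp Require Import reals.
Set Implicit Arguments. Unset Strict Implicit. Unset Printing Implicit Defensive.
Import Order.TTheory GRing.Theory Num.Theory.
Local Open Scope ring_scope.

(* Coordinates: a finite-dimensional real vector space of dimension d is
   represented by column vectors 'cV[R]_d; its dual by row vectors 'rV[R]_d,
   with the pairing h(v) = (h *m v) 0 0.
   S_Omega = 'cV_dO, S_E^* = 'cV_dE, S_E = S_E^** = 'rV_dE.
   A bilinear form B : S_E^* x S_Omega -> R is a matrix 'M_(dE,dO). *)

Section Defs.
Variable R : realType.

Definition bil {p q : nat} (B : 'M[R]_(p, q)) (w : 'cV[R]_p) (v : 'cV[R]_q) : R :=
  (w^T *m B *m v) 0 0.

Definition pairing {d : nat} (h : 'rV[R]_d) (v : 'cV[R]_d) : R := (h *m v) 0 0.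

Definition spans {d : nat} (S : 'cV[R]_d -> Prop) : Prop :=
  forall v : 'cV[R]_d, exists (k : nat) (c : 'I_k -> R) (s : 'I_k -> 'cV[R]_d),
    (forall i, S (s i)) /\ v = \sum_(i < k) c i *: s i.

Definition in_cone {d : nat} (S : 'cV[R]_d -> Prop) (v : 'cV[R]_d) : Prop :=
  exists (k : nat) (c : 'I_k -> R) (s : 'I_k -> 'cV[R]_d),
    (forall i, 0 <= c i) /\ (forall i, S (s i)) /\ v = \sum_(i < k) c i *: s i.

Definition in_conv {d : nat} (S : 'cV[R]_d -> Prop) (v : 'cV[R]_d) : Prop :=
  exists (k : nat) (c : 'I_k -> R) (s : 'I_k -> 'cV[R]_d),
    (forall i, 0 <= c i) /\ \sum_(i < k) c i = 1 /\
    (forall i, S (s i)) /\ v = \sum_(i < k) c i *: s i.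

Definition extreme_point {d : nat} (C : 'cV[R]_d -> Prop) (x : 'cV[R]_d) : Prop :=
  C x /\ forall (y z : 'cV[R]_d) (t : R), C y -> C z -> 0 < t -> t < 1 ->
    x = t *: y + (1 - t) *: z -> y = x /\ z = x.

Definition finitely_many_extreme_points {d : nat} (S : 'cV[R]_d -> Prop) : Prop :=
  exists l : seq 'cV[R]_d, forall x, extreme_point (in_conv S) x -> x \in l.

Definition in_dual_cone {d : nat} (S : 'cV[R]_d -> Prop) (h : 'rV[R]_d) : Prop :=
  forall v, in_cone S v -> 0 <= pairing h v.

Definition extreme_ray_dual {d : nat} (S : 'cV[R]_d -> Prop) (h : 'rV[R]_d) : Prop :=
  in_dual_cone S h /\ h != 0 /\
  forall a b, in_dual_cone S a -> in_dual_cone S b -> h = a + b ->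
    exists alpha beta : R, 0 <= alpha /\ 0 <= beta /\ a = alpha *: h /\ b = beta *: h.

(* H (with rows h_1,...,h_n) is a facet map of Cone[S]: exactly one
   representative of each extreme ray of Cone[S]^*.  H(v) = H *m v. *)
Definition facet_map {d n : nat} (S : 'cV[R]_d -> Prop) (H : 'M[R]_(n, d)) : Prop :=
  (forall i, extreme_ray_dual S (row i H)) /\
  (forall i j, i != j -> ~ exists c : R, 0 < c /\ row i H = c *: row j H) /\
  (forall h, extreme_ray_dual S h -> exists i (c : R), 0 < c /\ h = c *: row i H).

Definition accessible_fragment {dO dE : nat}
    (Om : 'cV[R]_dO -> Prop) (Ef : 'cV[R]_dE -> Prop)
    (B : 'M[R]_(dE, dO)) (u : 'cV[R]_dE) : Prop :=
  spans Om /\ spans Ef /\ Ef u /\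
  finitely_many_extreme_points Om /\ finitely_many_extreme_points Ef.

(* simplicial-cone embedding: Lambda = 'I_k, linear maps as matrices *)
Definition simplicial_cone_embedding {dO dE : nat}
    (Om : 'cV[R]_dO -> Prop) (Ef : 'cV[R]_dE -> Prop) (B : 'M[R]_(dE, dO)) : Prop :=
  exists (k : nat) (tO : 'M[R]_(k, dO)) (tE : 'M[R]_(k, dE)),
    (forall s, Om s -> forall l, 0 <= (tO *m s) l 0) /\
    (forall e, Ef e -> forall l, 0 <= (tE *m e) l 0) /\
    (forall w v, bil B w v = \sum_(l < k) (tE *m w) l 0 * (tO *m v) l 0).

End Defs.

From HB Require Import structures.
From mathcomp Require Import all_boot all_order all_algebra.
From mathcomp Require Import reals boolp classical_sets.
From mathcomp Require Import ring lra.
Set Implicit Arguments. Unset Strict Implicit. Unset Printing Implicit Defensive.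
Import Order.TTheory GRing.Theory Num.Theory.
Local Open Scope ring_scope.

(* A simplicial-cone embedding is given by two matrices tau_E, tau_Omega whose
   rows are nonnegative on E, resp. Omega, i.e. lie in the dual cones, and
   B = tau_E^T tau_Omega.  Since the cones span, their dual cones are pointed
   and closed, so (finite-dimensional Krein-Milman for cones) every element of
   a dual cone is a nonnegative combination of its extreme rays, i.e. of the
   rows of the facet map: tau_Omega = s_Omega H_Omega and tau_E = s_E H_E with
   s_Omega, s_E >= 0, and sigma := s_E^T s_Omega works.  Conversely
   tau_Omega := sigma H_Omega and tau_E := H_E is an embedding.
   The conic Krein-Milman step is proved by induction on the dimension of the
   smallest face containing h: if that face is a ray, h is extreme; otherwise
   walk from h in both directions along a line of the face until leaving the
   dual cone, which writes h as a positive combination of two points of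
   strictly smaller faces. *)

Section Pairing.
Variables (R : realType) (d : nat).
Implicit Types (a b : 'rV[R]_d) (v : 'cV[R]_d).

Lemma pairingD a b v : pairing (a + b) v = pairing a v + pairing b v.
Proof. by rewrite /pairing mulmxDl mxE. Qed.

Lemma pairingZ (c : R) a v : pairing (c *: a) v = c * pairing a v.
Proof. by rewrite /pairing -scalemxAl mxE. Qed.

Lemma pairing0 v : pairing 0 v = 0.
Proof. by rewrite /pairing mul0mx mxE. Qed.

Lemma pairing_sumr a k (c : 'I_k -> R) (s : 'I_k -> 'cV[R]_d) :
  pairing a (\sum_(i < k) c i *: s i) = \sum_(i < k) c i * pairing a (s i).
Proof.
rewrite /pairing mulmx_sumr summxE; apply: eq_bigr => i _.
by rewrite -scalemxAr mxE.
Qed.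

Lemma pairing_row p (M : 'M[R]_(p, d)) i v : pairing (row i M) v = (M *m v) i 0.
Proof. by rewrite /pairing -row_mul mxE. Qed.

End Pairing.

Section DualCone.
Variables (R : realType) (d : nat) (S : 'cV[R]_d -> Prop).
Implicit Types (h x y z : 'rV[R]_d).
Local Notation K := (in_dual_cone S).

Lemma in_cone_mem s : S s -> in_cone S s.
Proof.
move=> Ss; exists 1%N, (fun _ => 1), (fun _ => s); split => //; split => //.
by rewrite big_ord1 scale1r.
Qed.

Lemma in_dual_coneP h : K h <-> forall s, S s -> 0 <= pairing h s.
Proof.
split=> [Kh s Ss|Hh v [k [c [s [c_ge0 [Ss ->]]]]]]; first exact/Kh/in_cone_mem.
rewrite pairing_sumr; apply: sumr_ge0 => i _.
exact: mulr_ge0 (c_ge0 i) (Hh _ (Ss i)).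
Qed.

Lemma in_dual_cone0 : K 0.
Proof. by move=> v _; rewrite pairing0. Qed.

Lemma in_dual_coneD h x : K h -> K x -> K (h + x).
Proof. by move=> Kh Kx v Cv; rewrite pairingD addr_ge0 ?Kh ?Kx. Qed.

Lemma in_dual_coneZ (c : R) h : 0 <= c -> K h -> K (c *: h).
Proof. by move=> c_ge0 Kh v Cv; rewrite pairingZ mulr_ge0 ?Kh. Qed.

(* For [h] in the dual cone, [face_span h] is the linear span of the smallest
   face of the dual cone containing [h]. *)
Definition face_span h x :=
  exists c : R, 0 < c /\ K (c *: h + x) /\ K (c *: h - x).

Lemma face_span0 h : K h -> face_span h 0.
Proof. by move=> Kh; exists 1; rewrite subr0 addr0 scale1r. Qed.

Lemma face_span_refl h : K h -> face_span h h.
Proof.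
move=> Kh; exists 1; rewrite scale1r subrr.
by split => //; split; [exact: in_dual_coneD | exact: in_dual_cone0].
Qed.

Lemma face_spanN h x : face_span h x -> face_span h (- x).
Proof. by case=> c [c_gt0 [K1 K2]]; exists c; rewrite opprK. Qed.

Lemma face_spanD h x y : face_span h x -> face_span h y -> face_span h (x + y).
Proof.
case=> c [c_gt0 [K1 K2]] [e [e_gt0 [K3 K4]]]; exists (c + e).
split; first exact: addr_gt0.
have -> : (c + e) *: h + (x + y) = (c *: h + x) + (e *: h + y).
  by apply/matrixP => i j; rewrite !mxE; ring.
have -> : (c + e) *: h - (x + y) = (c *: h - x) + (e *: h - y).
  by apply/matrixP => i j; rewrite !mxE; ring.
by split; apply: in_dual_coneD.
Qed.

Lemma face_spanZ h (a : R) x : K h -> face_span h x -> face_span h (a *: x).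
Proof.
wlog a_ge0 : a x / 0 <= a => [wlog_ge0 Kh Fx|].
  have [a_ge0|a_lt0] := leP 0 a; first exact: wlog_ge0.
  rewrite -[a]opprK scaleNr -scalerN; apply: wlog_ge0 (face_spanN Fx) => //.
  by rewrite oppr_ge0 ltW.
move=> Kh [c [c_gt0 [K1 K2]]]; exists ((a + 1) * c).
split; first by rewrite mulr_gt0 ?ltr_wpDl.
have -> : (a + 1) * c *: h + a *: x = a *: (c *: h + x) + c *: h.
  by apply/matrixP => i j; rewrite !mxE; ring.
have -> : (a + 1) * c *: h - a *: x = a *: (c *: h - x) + c *: h.
  by apply/matrixP => i j; rewrite !mxE; ring.
by split; apply: in_dual_coneD; apply: in_dual_coneZ => //; exact: ltW.
Qed.

Lemma face_span_submx h p (M : 'M[R]_(p, d)) y :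
  K h -> (forall i, face_span h (row i M)) -> (y <= M)%MS -> face_span h y.
Proof.
move=> Kh FM /submxP [v ->]; rewrite mulmx_sum_row.
apply: (big_ind (face_span h)); [exact: face_span0 | exact: face_spanD |].
by move=> i _; apply: face_spanZ.
Qed.

Lemma face_span_combine h1 h2 (a b : R) y :
  K h2 -> 0 < a -> 0 <= b -> face_span h1 y -> face_span (a *: h1 + b *: h2) y.
Proof.
move=> K2 a_gt0 b_ge0 [c [c_gt0 [K3 K4]]]; exists (c / a).
split; first exact: divr_gt0.
have -> : (c / a) *: (a *: h1 + b *: h2) = c *: h1 + (c / a * b) *: h2.
  by rewrite scalerDr !scalerA mulfVK ?gt_eqF.
have cb_ge0 : 0 <= c / a * b by rewrite mulr_ge0 // divr_ge0 // ltW.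
have Kb := in_dual_coneZ cb_ge0 K2.
by split; rewrite addrAC; [exact: in_dual_coneD K3 Kb | exact: in_dual_coneD K4 Kb].
Qed.

Definition face_rank_lt h k :=
  forall p (M : 'M[R]_(p, d)), (forall i, face_span h (row i M)) -> (\rank M < k)%N.

Lemma face_rank_lt_dim h : face_rank_lt h d.+1.
Proof. by move=> p M _; rewrite ltnS rank_leq_col. Qed.

Lemma face_rank_lt_shrink h h1 w k :
  K h1 -> (forall y, face_span h1 y -> face_span h y) ->
  face_span h w -> ~ face_span h1 w -> face_rank_lt h k.+1 -> face_rank_lt h1 k.
Proof.
move=> K1 sub_h1_h Fw nF1w hk p M F1M.
have rankMw : (\rank M < \rank (col_mx M w))%N.
  apply: rank_ltmx; rewrite ltmxE -addsmxE addsmxSl col_mx_sub submx_refl /=.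
  by apply/negP => /(face_span_submx K1 F1M).
rewrite -ltnS; apply: leq_ltn_trans rankMw (hk _ _ _) => i.
rewrite -(splitK i); case: (split i) => j /=; first by rewrite rowKu; apply: sub_h1_h.
rewrite rowKd; have -> : row j w = w by apply/rowP => l; rewrite mxE (ord1 j).
exact: Fw.
Qed.

(* The exit point [h + t z] is reached at the largest step [t] keeping it in
   the dual cone; [s0] bounds the steps. *)
Lemma face_exit h z s0 :
  K h -> face_span h z -> in_cone S s0 -> pairing z s0 < 0 ->
  exists t : R, 0 < t /\ K (h + t *: z) /\ ~ face_span (h + t *: z) z.
Proof.
move=> Kh [c [c_gt0 [K1 _]]] Cs0 zs0_lt0.
pose E := fun t : R => 0 <= t /\ K (h + t *: z).
have E_ub v : in_cone S v -> pairing z v < 0 ->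
    ubound E (pairing h v / - pairing z v).
  move=> Cv zv t [t_ge0 Kt]; have := Kt v Cv; rewrite pairingD pairingZ => ?.
  rewrite ler_pdivlMr ?oppr_gt0 // mulrN; lra.
have E0 : E 0 by split; rewrite // scale0r addr0.
have supE : has_sup E.
  by split; [exists 0 | exists (pairing h s0 / - pairing z s0); apply: E_ub].
have E_step e t : 0 < e -> 0 <= t -> K (e *: (h + t *: z) + z) -> E (t + e^-1).
  move=> e_gt0 t_ge0 Ke; split; first by rewrite addr_ge0 // invr_ge0 ltW.
  have -> : h + (t + e^-1) *: z = e^-1 *: (e *: (h + t *: z) + z).
    by rewrite scalerDr scalerA mulVf ?gt_eqF // scale1r scalerDl addrA.
  by apply: in_dual_coneZ Ke; rewrite invr_ge0 ltW.
have sup_gt0 : 0 < sup E.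
  have Ec : E (0 + c^-1) by apply: E_step; rewrite ?scale0r ?addr0.
  have := sup_upper_bound supE Ec; rewrite add0r.
  by apply: lt_le_trans; rewrite invr_gt0.
exists (sup E); split => //; split.
  apply/in_dual_coneP => v Sv; rewrite pairingD pairingZ.
  have Khv := Kh v (in_cone_mem Sv).
  have [zv_ge0|zv_lt0] := leP 0 (pairing z v).
    by rewrite addr_ge0 // mulr_ge0 // ltW.
  have := ge_sup (ex_intro _ 0 E0) (E_ub v (in_cone_mem Sv) zv_lt0).
  rewrite ler_pdivlMr ?oppr_gt0 // mulrN; lra.
move=> [e [e_gt0 [Ke _]]].
have := sup_upper_bound supE (E_step _ _ e_gt0 (ltW sup_gt0) Ke).
have := invr_gt0 e; rewrite e_gt0; lra.
Qed.

Lemma spanning_family_annihilates (l : seq 'cV[R]_d) :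
  spans S -> exists p (s : 'I_p -> 'cV[R]_d), (forall i, S (s i)) /\
    forall y, (forall i, pairing y (s i) = 0) -> forall v, v \in l -> pairing y v = 0.
Proof.
move=> spanS; elim: l => [|v l [p [s [Ss s_ann]]]].
  by exists 0%N, (fun _ => 0); split => [[]|].
have [k [c [t [St ->]]]] := spanS v.
exists (p + k)%N, (fun i => match split i with inl a => s a | inr b => t b end).
split=> [i|y y_ann w]; first by case: (split i).
have ys0 a : pairing y (s a) = 0 by have := y_ann (unsplit (inl a)); rewrite unsplitK.
have yt0 b : pairing y (t b) = 0 by have := y_ann (unsplit (inr b)); rewrite unsplitK.
rewrite in_cons => /orP [/eqP ->|wl]; last exact: s_ann ys0 _ wl.
by rewrite pairing_sumr big1 // => i _; rewrite yt0 mulr0.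
Qed.

Lemma spanning_family : spans S -> exists p (s : 'I_p -> 'cV[R]_d),
  (forall i, S (s i)) /\ forall y, (forall i, pairing y (s i) = 0) -> y = 0.
Proof.
move=> spanS.
have [p [s [Ss s_ann]]] :=
  spanning_family_annihilates [seq delta_mx j 0 | j <- enum 'I_d] spanS.
exists p, s; split => // y y_ann; apply/rowP => j; rewrite mxE.
have := s_ann y y_ann (delta_mx j 0) (map_f _ (mem_enum _ j)).
by rewrite /pairing -colE mxE.
Qed.

Section PointedDualCone.
Variables (p : nat) (s : 'I_p -> 'cV[R]_d).
Hypotheses (Ss : forall i, S (s i))
  (s_separating : forall y, (forall i, pairing y (s i) = 0) -> y = 0).

(* Strictly positive on the nonzero elements of the dual cone, which is
   therefore pointed. *)
Definition total_pairing y := \sum_(i < p) pairing y (s i).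

Lemma total_pairingD x y : total_pairing (x + y) = total_pairing x + total_pairing y.
Proof. by rewrite /total_pairing -big_split; apply: eq_bigr => i _; rewrite pairingD. Qed.

Lemma total_pairingZ (c : R) y : total_pairing (c *: y) = c * total_pairing y.
Proof. by rewrite /total_pairing mulr_sumr; apply: eq_bigr => i _; rewrite pairingZ. Qed.

Lemma total_pairingN y : total_pairing (- y) = - total_pairing y.
Proof. by rewrite -scaleN1r total_pairingZ mulN1r. Qed.

Lemma total_pairing_ge0 y : K y -> 0 <= total_pairing y.
Proof. by move=> Ky; apply: sumr_ge0 => i _; apply: Ky; apply: in_cone_mem. Qed.

Lemma total_pairing_gt0 y : K y -> y != 0 -> 0 < total_pairing y.
Proof.
move=> Ky y_neq0; rewrite lt_def total_pairing_ge0 // andbT.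
apply: contra y_neq0; rewrite psumr_eq0 => [/allP y_ann|i _]; last first.
  by apply: Ky; apply: in_cone_mem.
by apply/eqP/s_separating => i; apply/eqP/y_ann; rewrite mem_index_enum.
Qed.

Lemma total_pairing_eq0_neg y :
  y != 0 -> total_pairing y = 0 -> exists i, pairing y (s i) < 0.
Proof.
move=> y_neq0 /eqP y0.
have [/existsP [i yi_lt0]|/existsPn yi_ge0] := boolP [exists i, pairing y (s i) < 0].
  by exists i.
move: y0; rewrite psumr_eq0 => [/allP y_ann|i _]; last by rewrite leNgt yi_ge0.
by case/eqP: y_neq0; apply/s_separating => i; apply/eqP/y_ann; rewrite mem_index_enum.
Qed.

Lemma extreme_ray_face_line h :
  K h -> h != 0 -> (forall x, face_span h x -> exists al : R, x = al *: h) ->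
  extreme_ray_dual S h.
Proof.
move=> Kh h_neq0 line; split=> //; split=> // a b Ka Kb hab.
have [al a_al] : exists al : R, a = al *: h.
  apply: line; exists 1; rewrite scale1r; split=> //; split.
    by rewrite {1}hab; apply: in_dual_coneD => //; apply: in_dual_coneD.
  by rewrite {1}hab addrAC subrr add0r.
have b_al : b = (1 - al) *: h by rewrite scalerBl scale1r {1}hab a_al addrAC subrr add0r.
have h_gt0 := total_pairing_gt0 Kh h_neq0.
have := total_pairing_ge0 Ka; have := total_pairing_ge0 Kb.
rewrite a_al b_al !total_pairingZ !pmulr_lge0 // => b_ge0 a_ge0.
by exists al, (1 - al).
Qed.

Lemma face_split h x :
  K h -> h != 0 -> face_span h x -> ~ (exists al : R, x = al *: h) ->
  exists h1 h2 (a b : R), [/\ 0 < a, 0 < b, h = a *: h1 + b *: h2, K h1 & K h2] /\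
    forall k, face_rank_lt h k.+1 -> face_rank_lt h1 k /\ face_rank_lt h2 k.
Proof.
move=> Kh h_neq0 Fx x_not_line; have h_gt0 := total_pairing_gt0 Kh h_neq0.
pose z := x - (total_pairing x / total_pairing h) *: h.
have Fz : face_span h z.
  by apply: face_spanD Fx (face_spanN (face_spanZ _ Kh (face_span_refl Kh))).
have z_neq0 : z != 0.
  apply/eqP => /subr0_eq x_eq; apply: x_not_line.
  by exists (total_pairing x / total_pairing h).
have z0 : total_pairing z = 0.
  by rewrite total_pairingD total_pairingN total_pairingZ divfK ?subrr ?gt_eqF.
have [i zi_lt0] := total_pairing_eq0_neg z_neq0 z0.
have [j zj_lt0] : exists j, pairing (- z) (s j) < 0.
  by apply: total_pairing_eq0_neg; rewrite ?oppr_eq0 ?total_pairingN ?z0 ?oppr0.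
have [t1 [t1_gt0 [K1 nF1]]] := face_exit Kh Fz (in_cone_mem (Ss i)) zi_lt0.
have [t2 [t2_gt0 [K2 nF2]]] := face_exit Kh (face_spanN Fz) (in_cone_mem (Ss j)) zj_lt0.
have t_gt0 : 0 < t1 + t2 by rewrite addr_gt0.
pose a := t2 / (t1 + t2); pose b := t1 / (t1 + t2).
have a_gt0 : 0 < a by rewrite divr_gt0.
have b_gt0 : 0 < b by rewrite divr_gt0.
have h_ab : h = a *: (h + t1 *: z) + b *: (h + t2 *: - z).
  by apply/matrixP => r l; rewrite !mxE /a /b; field; rewrite !gt_eqF.
exists (h + t1 *: z), (h + t2 *: - z), a, b; split=> // k hk; split.
  apply: face_rank_lt_shrink K1 _ Fz nF1 hk => y F1y.
  by rewrite h_ab; apply: face_span_combine (ltW b_gt0) F1y.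
apply: face_rank_lt_shrink K2 _ (face_spanN Fz) nF2 hk => y F2y.
by rewrite h_ab addrC; apply: face_span_combine (ltW a_gt0) F2y.
Qed.

End PointedDualCone.

Section ExtremeRays.
Variables (n : nat) (H : 'M[R]_(n, d)).
Hypothesis H_rays :
  forall h, extreme_ray_dual S h -> exists i (c : R), 0 < c /\ h = c *: row i H.

Lemma dual_cone_rows_conic h : spans S -> K h ->
  exists a : 'rV[R]_n, (forall j, 0 <= a 0 j) /\ h = a *m H.
Proof.
move=> spanS Kh; have [p [s [Ss s_sep]]] := spanning_family spanS.
elim: d.+1 h Kh (@face_rank_lt_dim h) => [|k IHk] h Kh hk.
  have : (\rank (0%R : 'M[R]_(0, d)) < 0)%N by apply: hk; case.
  by rewrite ltn0.
have [->|h_neq0] := eqVneq h 0.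
  by exists 0; rewrite mul0mx; split=> // j; rewrite mxE.
have [line|] := pselect (forall x, face_span h x -> exists al : R, x = al *: h).
  have [i [c [c_gt0 ->]]] := H_rays (extreme_ray_face_line Ss s_sep Kh h_neq0 line).
  exists (c *: delta_mx 0 i); rewrite -scalemxAl -rowE; split=> // j.
  by rewrite !mxE mulr_ge0 ?ler0n // ltW.
move=> /existsNP [x /not_implyP [Fx x_not_line]].
have [h1 [h2 [a [b [[a_gt0 b_gt0 h_eq K1 K2] hk12]]]]] :=
  face_split Ss s_sep Kh h_neq0 Fx x_not_line.
have [hk1 hk2] := hk12 _ hk; rewrite h_eq.
have [a1 [a1_ge0 ->]] := IHk _ K1 hk1; have [a2 [a2_ge0 ->]] := IHk _ K2 hk2.
exists (a *: a1 + b *: a2); rewrite mulmxDl -!scalemxAl; split=> // j.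
by rewrite !mxE addr_ge0 // mulr_ge0 // ltW.
Qed.

Lemma dual_cone_rows_factor k (t : 'M[R]_(k, d)) : spans S ->
  (forall s, S s -> forall l, 0 <= (t *m s) l 0) ->
  exists sg : 'M[R]_(k, n), (forall i j, 0 <= sg i j) /\ t = sg *m H.
Proof.
move=> spanS t_ge0.
have /fin_all_exists [a a_rows] : forall l,
    exists a : 'rV[R]_n, (forall j, 0 <= a 0 j) /\ row l t = a *m H.
  move=> l; apply: dual_cone_rows_conic spanS _.
  by apply/in_dual_coneP => s Ss; rewrite pairing_row t_ge0.
exists (\matrix_(l, j) a l 0 j); split=> [l j|]; first by rewrite mxE; case: (a_rows l).
apply/row_matrixP => l; rewrite row_mul; case: (a_rows l) => _ ->.
by congr (_ *m _); apply/rowP => j; rewrite !mxE.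
Qed.

End ExtremeRays.

Lemma facet_map_ge0 n (H : 'M[R]_(n, d)) s i :
  facet_map S H -> S s -> 0 <= (H *m s) i 0.
Proof.
by case=> H_ext _ Ss; rewrite -pairing_row; apply: (H_ext i).1; apply: in_cone_mem.
Qed.

End DualCone.

Lemma sum_mul_col (R : pzRingType) k (x y : 'cV[R]_k) :
  \sum_(l < k) x l 0 * y l 0 = (x^T *m y) 0 0.
Proof. by rewrite mxE; apply: eq_bigr => l _; rewrite mxE. Qed.

Theorem mainTheorem1 (R : realType) (dO dE : nat)
    (Om : 'cV[R]_dO -> Prop) (Ef : 'cV[R]_dE -> Prop)
    (B : 'M[R]_(dE, dO)) (u : 'cV[R]_dE)
    (n m : nat) (HO : 'M[R]_(n, dO)) (HE : 'M[R]_(m, dE)) :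
  accessible_fragment Om Ef B u ->
  facet_map Om HO -> facet_map Ef HE ->
  (simplicial_cone_embedding Om Ef B <->
   exists sigma : 'M[R]_(m, n),
     (forall i j, 0 <= sigma i j) /\
     (forall (w : 'cV[R]_dE) (v : 'cV[R]_dO),
        bil B w v = ((HE *m w)^T *m sigma *m (HO *m v)) 0 0)).
Proof.
move=> [spanO [spanE _]] FO FE; split.
  case=> k [tO [tE [tO_ge0 [tE_ge0 B_tau]]]].
  have [sO [sO_ge0 tO_eq]] := dual_cone_rows_factor FO.2.2 spanO tO_ge0.
  have [sE [sE_ge0 tE_eq]] := dual_cone_rows_factor FE.2.2 spanE tE_ge0.
  exists (sE^T *m sO); split=> [i j|w v].
    by rewrite mxE sumr_ge0 // => l _; rewrite mxE mulr_ge0.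
  by rewrite B_tau sum_mul_col tO_eq tE_eq !trmx_mul !mulmxA.
case=> sg [sg_ge0 B_sg]; exists m, (sg *m HO), HE; split; [|split].
- move=> s Os l; rewrite -mulmxA mxE sumr_ge0 // => j _.
  by apply: mulr_ge0 => //; exact: facet_map_ge0 FO Os.
- by move=> e Ee l; exact: facet_map_ge0 FE Ee.
- by move=> w v; rewrite B_sg sum_mul_col !mulmxA.
Qed.
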